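(* Let $\mathcal{B}$ be a finite relational structure with domain $B$ and let $b\in B$ be such that the shop $\exists_b$ is a she of $\mathcal{B}$. Let $\varphi(u,v_1,\ldots,v_k)$ be a formula of $\{\exists,\forall,\wedge,\vee\}$-FO. Then for all $x_1,\ldots,x_k\in B$: $\mathcal{B}\models\exists u\,\varphi(u,x_1,\ldots,x_k)$ if and only if $\mathcal{B}\models\varphi(b,x_1,\ldots,x_k)$.
   Context: $\{\exists,\forall,\wedge,\vee\}$-FO is the positive equality-free fragment of first-order logic over the signature of $\mathcal{B}$: formulas built from atomic formulas $R(w_1,\ldots,w_r)$ using only $\wedge,\vee,\exists,\forall$. A shop on $B$ is a map $f:B\to\mathcal{P}(B)\setminus\{\emptyset\}$ such that every $y\in B$ lies in some $f(x)$. A she of $\mathcal{B}$ is a shop $f$ such that for every relation $R$ of $\mathcal{B}$ of arity $i$, if $\mathcal{B}\models R(x_1,\ldots,x_i)$ then $\mathcal{B}\models R(y_1,\ldots,y_i)$ for all $y_j\in f(x_j)$. The shop $\exists_b$ is defined by $\exists_b(x)=\{x,b\}$ for all $x\in B$. *)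

From mathcomp Require Import all_boot.
Set Implicit Arguments.
Unset Strict Implicit.
Unset Printing Implicit Defensive.

Record relstruct := RelStruct {
  sym : finType;
  arity : sym -> nat;
  dom : finType;
  interp : forall R : sym, pred ((arity R).-tuple dom)
}.

Inductive formula (S : finType) (ar : S -> nat) : Type :=
| FAtom (R : S) (w : (ar R).-tuple nat)
| FAnd (f g : formula ar)
| FOr (f g : formula ar)
| FEx (x : nat) (f : formula ar)
| FAll (x : nat) (f : formula ar).

Definition upd (T : Type) (env : nat -> T) (x : nat) (a : T) : nat -> T :=
  fun y => if y == x then a else env y.

Fixpoint sat (B : relstruct) (env : nat -> dom B) (f : formula (@arity B))
  {struct f} : Prop :=
  match f with
  | FAtom R w => interp (map_tuple env w)
  | FAnd f g => sat env f /\ sat env g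
  | FOr f g => sat env f \/ sat env g
  | FEx x f => exists a : dom B, sat (upd env x a) f
  | FAll x f => forall a : dom B, sat (upd env x a) f
  end.

Fixpoint fv (S : finType) (ar : S -> nat) (f : formula ar) : seq nat :=
  match f with
  | FAtom _ w => val w
  | FAnd f g => fv f ++ fv g
  | FOr f g => fv f ++ fv g
  | FEx x f => filter (fun y => y != x) (fv f)
  | FAll x f => filter (fun y => y != x) (fv f)
  end.

Definition shop (T : finType) (f : T -> {set T}) : Prop :=
  (forall x, f x != set0) /\ (forall y, exists x, y \in f x).

Definition she (B : relstruct) (f : dom B -> {set dom B}) : Prop :=
  shop f /\
  forall (R : sym B) (x y : (arity R).-tuple (dom B)),
    interp x -> (forall j : 'I_(arity R), tnth y j \in f (tnth x j)) -> interp y.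

Definition exists_shop (T : finType) (b : T) : T -> {set T} :=
  fun x => [set x; b].

(* Convention for phi(u, v_1, ..., v_k): u is variable 0, v_i is variable i.
   env a xs assigns a to u and xs_i to v_i (other variables: a, irrelevant). *)
Definition env_of (T : Type) (k : nat) (a : T) (xs : k.-tuple T) : nat -> T :=
  fun n => match n with 0 => a | i.+1 => nth a xs i end.

From mathcomp Require Import all_boot.

(* Truth of positive equality-free formulas is preserved by every she, applied
   pointwise to the assignment: nonemptiness of [f x] handles [exists] and the
   covering condition of a shop handles [forall].  For the she [x |-> {x, b}],
   the value of [u] can be moved from any witness to [b] and back. *)

Lemma sat_she (B : relstruct) (f : dom B -> {set dom B})
    (phi : formula (@arity B)) (env env' : nat -> dom B) :
  she f -> (forall v, env' v \in f (env v)) -> sat env phi -> sat env' phi.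
Proof.
move=> [[f_neq0 f_cover] f_pres].
elim: phi env env' => [R w|g IHg h IHh|g IHg h IHh|x g IHg|x g IHg] env env' envP /=.
- by move=> Rw; apply: (f_pres R (map_tuple env w)) => // j; rewrite !tnth_map.
- by case=> /IHg satg /IHh sath; split; [apply: satg|apply: sath].
- by case=> [/IHg satg|/IHh sath]; [left; apply: satg|right; apply: sath].
- case=> a /IHg satg; have /set0Pn[a' a'P] := f_neq0 a.
  by exists a'; apply: satg => v; rewrite /upd; case: eqP.
- move=> satg a'; have [a a'P] := f_cover a'.
  by apply: (IHg (upd env x a)) => // v; rewrite /upd; case: eqP.
Qed.

Lemma in_exists_shopl (T : finType) (b x : T) : x \in exists_shop b x.
Proof. by rewrite !inE eqxx. Qed.

Lemma in_exists_shopr (T : finType) (b x : T) : b \in exists_shop b x.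
Proof. by rewrite !inE eqxx orbT. Qed.

Theorem lemma3p2 (B : relstruct) (b : dom B) (k : nat)
  (phi : formula (@arity B)) :
  she (exists_shop b) ->
  (forall v, v \in fv phi -> v <= k) ->
  forall xs : k.-tuple (dom B),
    sat (env_of b xs) (FEx 0 phi) <-> sat (env_of b xs) phi.
Proof.
move=> sheb _ xs; split => /=.
- case=> a; apply: sat_she sheb _ => -[|v] /=.
    exact: in_exists_shopr.
  exact: in_exists_shopl.
- move=> satb; exists b; apply: sat_she sheb _ satb => -[|v] /=;
    exact: in_exists_shopl.
Qed.
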